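(* Let $0<\kappa<1$, $0<h<\frac12$, $h_n=h2^{-n-1}$, and $a,b,c,C\ge0$. Let $\nu_n,\zeta_n,\eta_n,\epsilon_n$ ($n\ge0$) be non-negative sequences with $\nu_n\le C\kappa^{-2b}h_n^{-2a}\zeta_n^c(\zeta_n+\eta_n)\epsilon_n$ for $n\ge0$, and, for $n\ge1$, $\zeta_n\le\zeta_{n-1}+\nu_{n-1}$, $\eta_n\le\eta_{n-1}+\nu_{n-1}$, $\epsilon_n\le\nu_{n-1}\epsilon_{n-1}$, with $\zeta_0=\zeta\ge1$, $\eta_0=0$, $\epsilon_0=\epsilon$. Then there is $C'=C'(C,a,b,c)>0$ such that if for some $\varsigma\le1$ $$\epsilon<\frac{\varsigma}{C'}\kappa^{2b+1}h^{2a+1}\zeta^{-c-2},$$ then for all $n\ge0$: $\epsilon_n\le(\kappa h\zeta^{-1})^{2^n-1}\epsilon$ and $\eta_n<\varsigma\zeta_n^{-1}$. *)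

From Stdlib Require Import Reals.
Open Scope R_scope.

(* Real power x^y for x >= 0 and real exponent y, with the usual
   conventions 0^y = 0 for y <> 0 and 0^0 = 1 (Stdlib's Rpower is only
   meaningful for x > 0). *)
Definition rpow (x y : R) : R :=
  if Req_EM_T x 0 then (if Req_EM_T y 0 then 1 else 0) else Rpower x y.

Definition hseq (h : R) (n : nat) : R := h / 2 ^ (S n).

From Stdlib Require Import Reals Lra Lia.
Open Scope R_scope.

(* Write z = zeta_0, e = eps_0, q = kappa h / z and A = 2^(2a).
   Since h_n^(-2a) = h^(-2a) A^(n+1), as long as zeta_n <= 2z and eta_n <= z
   the hypothesis on nu_n gives a linear bound  nu_n <= K A^(n+1) eps_n  with a
   constant K independent of n.  Then E_n := eps_n A^n obeys the quadratic
   recursion E_(n+1) <= K A^2 E_n^2, so E_n <= q^(2^n - 1) e as soon as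
   K e A^2 <= q; in particular nu_n <= K A e 2^(-n), whose sum bounds the
   growth of zeta and eta by 2 K A e, which keeps zeta_n <= 2z, eta_n <= z and
   closes a simultaneous induction. *)

Lemma Rpower_pos (x y : R) : 0 < Rpower x y.
Proof. apply exp_pos. Qed.

Lemma rpow_of_pos (x y : R) : 0 < x -> rpow x y = Rpower x y.
Proof. intros Hx. unfold rpow. destruct (Req_EM_T x 0); [lra | reflexivity]. Qed.

Lemma rpow_nonneg (x y : R) : 0 <= rpow x y.
Proof.
  unfold rpow. destruct (Req_EM_T x 0); [destruct (Req_EM_T y 0); lra |].
  left; apply Rpower_pos.
Qed.

Lemma Rpower_succ_div (x y : R) : 0 < x -> Rpower x (y + 1) = x / Rpower x (- y).
Proof.
  intros Hx. unfold Rdiv.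
  rewrite Rpower_Ropp, Rinv_inv, Rpower_plus, Rpower_1 by exact Hx. ring.
Qed.

Lemma Rpower_neg_add2 (z c : R) : 0 < z -> Rpower z (- c - 2) = / z ^ 2 / Rpower z c.
Proof.
  intros Hz. replace (- c - 2) with (- (c + INR 2)) by (simpl; ring).
  rewrite Rpower_Ropp, Rpower_plus, Rpower_pow by exact Hz.
  pose proof (Rpower_pos z c). assert (0 < z ^ 2) by (apply pow_lt; exact Hz).
  field; lra.
Qed.

Lemma Rpower_hseq (h a : R) (n : nat) : 0 < h ->
  Rpower (hseq h n) (- (2 * a)) = Rpower h (- (2 * a)) * Rpower 2 (2 * a) ^ S n.
Proof.
  intros Hh. unfold hseq, Rdiv.
  assert (H2 : 0 < 2 ^ S n) by (apply pow_lt; lra).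
  rewrite <- Rpower_mult_distr by (try apply Rinv_0_lt_compat; lra).
  f_equal.
  replace (Rpower (/ 2 ^ S n) (- (2 * a))) with (Rpower (2 ^ S n) (2 * a))
    by (unfold Rpower; rewrite ln_Rinv by lra; f_equal; ring).
  rewrite <- (Rpower_pow (S n) 2), Rpower_mult by lra.
  rewrite <- Rpower_pow, Rpower_mult by apply Rpower_pos.
  f_equal; ring.
Qed.

Lemma rpow_le_double (x z c : R) : 0 <= c -> 0 <= x <= 2 * z -> 0 < z ->
  rpow x c <= Rpower 2 c * Rpower z c.
Proof.
  intros Hc Hx Hz. rewrite Rpower_mult_distr by lra.
  unfold rpow. destruct (Req_EM_T x 0).
  - destruct (Req_EM_T c 0).
    + subst. rewrite Rpower_O by lra. lra.
    + left; apply Rpower_pos.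
  - apply Rle_Rpower_l; lra.
Qed.

Lemma pow_le_one (q : R) (k : nat) : 0 <= q <= 1 -> q ^ k <= 1.
Proof.
  intros Hq. induction k as [|k IH]; simpl; [lra |].
  assert (0 <= q ^ k) by (apply pow_le; lra). nra.
Qed.

Lemma pow2_ge1 (n : nat) : (1 <= 2 ^ n)%nat.
Proof. apply (Nat.pow_le_mono_r 2 0 n); lia. Qed.

Lemma le_pow2_pred (n : nat) : (n <= 2 ^ n - 1)%nat.
Proof. induction n as [|n IH]; simpl; [lia |]. pose proof (pow2_ge1 n). lia. Qed.

Lemma pow_pow2_pred_le_half (q : R) (n : nat) : 0 <= q <= 1 / 2 -> q ^ (2 ^ n - 1) <= (1 / 2) ^ n.
Proof.
  intros Hq. pose proof (le_pow2_pred n).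
  replace (2 ^ n - 1)%nat with (n + (2 ^ n - 1 - n))%nat by lia.
  rewrite pow_add.
  assert (q ^ n <= (1 / 2) ^ n) by (apply pow_incr; lra).
  assert (q ^ (2 ^ n - 1 - n) <= 1) by (apply pow_le_one; lra).
  assert (0 <= q ^ n) by (apply pow_le; lra).
  assert (0 <= q ^ (2 ^ n - 1 - n)) by (apply pow_le; lra).
  nra.
Qed.

Lemma pow_pow2_pred_succ (q : R) (n : nat) : q * (q ^ (2 ^ n - 1)) ^ 2 = q ^ (2 ^ S n - 1).
Proof.
  pose proof (pow2_ge1 n).
  replace (2 ^ S n - 1)%nat with (S ((2 ^ n - 1) * 2)) by (simpl; lia).
  now rewrite <- (tech_pow_Rmult q ((2 ^ n - 1) * 2)), pow_mult.
Qed.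

Section QuadraticRecursion.

Variables (K A q z : R) (nu zeta eta eps : nat -> R).
Hypothesis K_nonneg : 0 <= K.
Hypothesis A_ge1 : 1 <= A.
Hypothesis q_range : 0 <= q <= 1 / 2.
Hypothesis eps_nonneg : forall n, 0 <= eps n.
Hypothesis zeta_succ : forall n, zeta (S n) <= zeta n + nu n.
Hypothesis eta_succ : forall n, eta (S n) <= eta n + nu n.
Hypothesis eps_succ : forall n, eps (S n) <= nu n * eps n.
Hypothesis nu_bound :
  forall n, zeta n <= 2 * z -> eta n <= z -> nu n <= K * A ^ S n * eps n.
Hypothesis zeta0_le : zeta 0%nat <= z.
Hypothesis eta0 : eta 0%nat = 0.
Hypothesis eps0_small : K * eps 0%nat * A ^ 2 <= q.
Hypothesis room : 2 * (K * A * eps 0%nat) <= z.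

(* The inductive invariant; zeta and eta grow by at most K A eps_0 2^(-k) at step k. *)
Definition recursion_invariant (n : nat) : Prop :=
  eps n * A ^ n <= q ^ (2 ^ n - 1) * eps 0%nat /\
  zeta n <= z + 2 * (K * A * eps 0%nat) * (1 - (1 / 2) ^ n) /\
  eta n <= 2 * (K * A * eps 0%nat) * (1 - (1 / 2) ^ n).

Lemma recursion_invariant_succ (n : nat) : recursion_invariant n -> recursion_invariant (S n).
Proof.
  intros [Heps [Hzeta Heta]].
  set (e := eps 0%nat) in *. set (Q := q ^ (2 ^ n - 1)) in *. set (w := (1 / 2) ^ n) in *.
  assert (Hw : 0 <= w <= 1) by (split; [apply pow_le | apply pow_le_one]; lra).
  assert (HQw : Q <= w) by (apply pow_pow2_pred_le_half; lra).
  assert (HQ : 0 <= Q) by (apply pow_le; lra).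
  assert (HAn : 1 <= A ^ n) by (apply pow_R1_Rle; lra).
  assert (He : 0 <= e) by apply eps_nonneg.
  assert (HKA : 0 <= K * A) by nra.
  assert (HD : 0 <= K * A * e) by nra.
  assert (Hen := eps_nonneg n).
  assert (Hnu : nu n <= K * A * (eps n * A ^ n)).
  { replace (K * A * (eps n * A ^ n)) with (K * A ^ S n * eps n) by (simpl; ring).
    apply nu_bound; nra. }
  assert (Hdecay : nu n <= K * A * e * w).
  { assert (K * A * (eps n * A ^ n) <= K * A * (Q * e)) by (apply Rmult_le_compat_l; lra).
    assert (Q * e <= w * e) by (apply Rmult_le_compat_r; lra). nra. }
  unfold recursion_invariant; fold e.
  replace ((1 / 2) ^ S n) with (w / 2) by (unfold w; simpl; field).
  split; [| split; [specialize (zeta_succ n) | specialize (eta_succ n)]; nra].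
  (* E_(n+1) <= K A^2 E_n^2 <= (K e A^2) Q^2 e <= q Q^2 e. *)
  rewrite <- pow_pow2_pred_succ; fold Q.
  assert (Hquad : eps (S n) * A ^ S n <= K * A ^ 2 * (eps n * A ^ n) ^ 2).
  { assert (eps (S n) * A ^ S n <= nu n * eps n * A ^ S n)
      by (apply Rmult_le_compat_r; [apply pow_le; lra | apply eps_succ]).
    assert (nu n * eps n * A ^ S n <= K * A * (eps n * A ^ n) * eps n * A ^ S n)
      by (apply Rmult_le_compat_r; [apply pow_le; lra | apply Rmult_le_compat_r; lra]).
    replace (K * A ^ 2 * (eps n * A ^ n) ^ 2)
      with (K * A * (eps n * A ^ n) * eps n * A ^ S n) by (simpl; ring).
    lra. }
  assert (HEn : (eps n * A ^ n) ^ 2 <= (Q * e) ^ 2) by (apply pow_incr; nra).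
  assert (K * A ^ 2 * (eps n * A ^ n) ^ 2 <= K * A ^ 2 * (Q * e) ^ 2)
    by (apply Rmult_le_compat_l; [nra | exact HEn]).
  assert (K * e * A ^ 2 * (Q ^ 2 * e) <= q * (Q ^ 2 * e))
    by (apply Rmult_le_compat_r; [nra | exact eps0_small]).
  replace (K * A ^ 2 * (Q * e) ^ 2) with (K * e * A ^ 2 * (Q ^ 2 * e)) in * by ring.
  nra.
Qed.

Lemma recursion_invariant_all (n : nat) : recursion_invariant n.
Proof.
  induction n as [|n IH]; [| now apply recursion_invariant_succ].
  unfold recursion_invariant. simpl. rewrite eta0. lra.
Qed.

Corollary quadratic_recursion_bounds (n : nat) :
  eps n * A ^ n <= q ^ (2 ^ n - 1) * eps 0%nat /\
  zeta n <= z + 2 * (K * A * eps 0%nat) /\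
  eta n <= 2 * (K * A * eps 0%nat).
Proof.
  destruct (recursion_invariant_all n) as [Heps [Hzeta Heta]].
  assert (0 <= (1 / 2) ^ n) by (apply pow_le; lra).
  assert (0 <= K * A * eps 0%nat) by (apply Rmult_le_pos; [apply Rmult_le_pos | apply eps_nonneg]; lra).
  split; [exact Heps | split; nra].
Qed.

End QuadraticRecursion.

(* A = 2^(2a): the growth factor of h_n^(-2a) from one scale to the next. *)
Definition growth (a : R) : R := Rpower 2 (2 * a).

(* K: nu_n <= K A^(n+1) eps_n whenever zeta_n <= 2z and eta_n <= z. *)
Definition step_const (C a b c kappa h z : R) : R :=
  C * Rpower kappa (- (2 * b)) * Rpower h (- (2 * a)) * (Rpower 2 c * Rpower z c) * (3 * z).

Definition threshold_const (C a c : R) : R := 48 * (C + 1) * Rpower 2 c * growth a ^ 2.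

Lemma growth_ge1 (a : R) : 0 <= a -> 1 <= growth a.
Proof. intros Ha. unfold growth. rewrite <- (Rpower_O 2) by lra. apply Rle_Rpower; lra. Qed.

Lemma threshold_const_pos (C a c : R) : 0 <= C -> 0 < threshold_const C a c.
Proof.
  intros HC. unfold threshold_const.
  assert (0 < growth a ^ 2) by (apply pow_lt, Rpower_pos).
  pose proof (Rpower_pos 2 c).
  apply Rmult_lt_0_compat; [| assumption].
  apply Rmult_lt_0_compat; lra.
Qed.

Lemma step_const_nonneg (C a b c kappa h z : R) :
  0 <= C -> 0 < z -> 0 <= step_const C a b c kappa h z.
Proof.
  intros HC Hz. unfold step_const.
  pose proof (Rpower_pos kappa (- (2 * b))). pose proof (Rpower_pos h (- (2 * a))).
  pose proof (Rpower_pos 2 c). pose proof (Rpower_pos z c).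
  repeat apply Rmult_le_pos; nra.
Qed.

Lemma nu_linear_bound (C a b c kappa h z x y e nu_n : R) (n : nat) :
  0 <= C -> 0 <= c -> 0 < kappa -> 0 < h -> 0 < z ->
  0 <= x <= 2 * z -> 0 <= y <= z -> 0 <= e ->
  nu_n <= C * rpow kappa (- (2 * b)) * rpow (hseq h n) (- (2 * a)) * rpow x c * (x + y) * e ->
  nu_n <= step_const C a b c kappa h z * growth a ^ S n * e.
Proof.
  intros HC Hc Hk Hh Hz Hx Hy He Hnu.
  assert (Hhn : 0 < hseq h n) by (unfold hseq; apply Rdiv_lt_0_compat; [lra | apply pow_lt; lra]).
  rewrite (rpow_of_pos kappa), (rpow_of_pos (hseq h n)), Rpower_hseq in Hnu by lra.
  fold (growth a) in Hnu.
  set (M := C * Rpower kappa (- (2 * b)) * Rpower h (- (2 * a)) * growth a ^ S n * e).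
  assert (HM : 0 <= M).
  { pose proof (Rpower_pos kappa (- (2 * b))). pose proof (Rpower_pos h (- (2 * a))).
    assert (0 <= growth a ^ S n) by (apply pow_le; left; apply Rpower_pos).
    unfold M; apply Rmult_le_pos; [apply Rmult_le_pos; [repeat apply Rmult_le_pos |] |]; lra. }
  assert (Hxc : rpow x c <= Rpower 2 c * Rpower z c) by (apply rpow_le_double; lra).
  assert (Hprod : rpow x c * (x + y) <= (Rpower 2 c * Rpower z c) * (3 * z))
    by (apply Rmult_le_compat; [apply rpow_nonneg | lra | exact Hxc | lra]).
  replace (step_const C a b c kappa h z * growth a ^ S n * e)
    with (M * ((Rpower 2 c * Rpower z c) * (3 * z))) by (unfold M, step_const; ring).
  eapply Rle_trans; [exact Hnu |].
  replace (C * Rpower kappa (- (2 * b)) * (Rpower h (- (2 * a)) * growth a ^ S n)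
             * rpow x c * (x + y) * e) with (M * (rpow x c * (x + y))) by (unfold M; ring).
  now apply Rmult_le_compat_l.
Qed.

(* The smallness hypothesis on eps_0 forces vs > 0 and gives K e A^2 <= q vs / 16:
   the powers of kappa, h and z in C' exactly compensate those in K. *)
Lemma initial_smallness (C a b c kappa h z vs e : R) :
  0 <= C -> 0 <= a -> 0 < kappa -> 0 < h -> 0 < z -> 0 <= e ->
  e < vs / threshold_const C a c * rpow kappa (2 * b + 1) * rpow h (2 * a + 1) * rpow z (- c - 2) ->
  0 < vs /\ step_const C a b c kappa h z * e * growth a ^ 2 <= kappa * h / z * vs / 16.
Proof.
  intros HC Ha Hk Hh Hz He Hsmall.
  rewrite !rpow_of_pos in Hsmall by lra.
  assert (Hvs : 0 < vs).
  { destruct (Rle_or_lt vs 0) as [Hv | Hv]; [exfalso | exact Hv].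
    pose proof (Rinv_0_lt_compat _ (threshold_const_pos C a c HC)).
    pose proof (Rpower_pos kappa (2 * b + 1)). pose proof (Rpower_pos h (2 * a + 1)).
    pose proof (Rpower_pos z (- c - 2)).
    assert (vs / threshold_const C a c <= 0) by (unfold Rdiv; nra).
    assert (0 < Rpower kappa (2 * b + 1) * Rpower h (2 * a + 1) * Rpower z (- c - 2))
      by (repeat apply Rmult_lt_0_compat; assumption).
    nra. }
  split; [exact Hvs |].
  set (K := step_const C a b c kappa h z).
  assert (HKA : 0 <= K * growth a ^ 2)
    by (apply Rmult_le_pos; [now apply step_const_nonneg | apply pow_le; pose proof (growth_ge1 a Ha); lra]).
  assert (Hbound : K * growth a ^ 2 * e <= K * growth a ^ 2
          * (vs / threshold_const C a c * Rpower kappa (2 * b + 1) * Rpower h (2 * a + 1)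
             * Rpower z (- c - 2))) by (apply Rmult_le_compat_l; lra).
  pose proof (growth_ge1 a Ha). pose proof (Rpower_pos 2 c).
  pose proof (Rpower_pos kappa (- (2 * b))) as Hk'. pose proof (Rpower_pos h (- (2 * a))) as Hh'.
  pose proof (Rpower_pos z c) as Hz'.
  rewrite (Rpower_succ_div kappa), (Rpower_succ_div h), Rpower_neg_add2 in Hbound by lra.
  replace (K * growth a ^ 2 * (vs / threshold_const C a c * (kappa / Rpower kappa (- (2 * b)))
           * (h / Rpower h (- (2 * a))) * (/ z ^ 2 / Rpower z c)))
    with (C / (C + 1) * (kappa * h / z * vs / 16)) in Hbound
    by (unfold K, step_const, threshold_const; field; repeat split; lra).
  assert (C / (C + 1) <= 1) by (apply Rmult_le_reg_r with (C + 1); [lra | field_simplify; lra]).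
  assert (0 <= kappa * h / z * vs / 16) by (unfold Rdiv; repeat apply Rmult_le_pos; try apply Rlt_le, Rinv_0_lt_compat; lra).
  nra.
Qed.

Lemma ratio_range (kappa h z : R) :
  0 < kappa < 1 -> 0 < h < 1 / 2 -> 1 <= z -> 0 <= kappa * h / z <= 1 / 2.
Proof.
  intros Hk Hh Hz. split.
  - unfold Rdiv. apply Rmult_le_pos; [nra | left; apply Rinv_0_lt_compat; lra].
  - apply Rmult_le_reg_r with z; [lra |].
    unfold Rdiv. rewrite Rmult_assoc, Rinv_l by lra. nra.
Qed.

(* Final step: eta_n zeta_n <= (q vs / 8)(2z) = kappa h vs / 4 < vs. *)
Lemma eta_lt_of_small (kappa h z vs x y : R) :
  0 < kappa < 1 -> 0 < h < 1 / 2 -> 1 <= z -> 0 < vs <= 1 ->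
  0 <= y <= kappa * h / z * vs / 8 -> 0 < x <= z + kappa * h / z * vs / 8 ->
  y < vs / x.
Proof.
  intros Hk Hh Hz Hvs Hy Hx.
  pose proof (ratio_range kappa h z Hk Hh Hz) as Hq.
  assert (Hx2 : x <= 2 * z) by nra.
  assert (Hyx : y * x <= kappa * h / z * vs / 8 * (2 * z)) by (apply Rmult_le_compat; lra).
  replace (kappa * h / z * vs / 8 * (2 * z)) with (kappa * h * vs / 4) in Hyx by (field; lra).
  apply Rmult_lt_reg_r with x; [lra |].
  assert (kappa * h * vs < 1 * vs) by (apply Rmult_lt_compat_r; nra).
  unfold Rdiv. rewrite Rmult_assoc, Rinv_l by lra. lra.
Qed.

Theorem lemma8p6 :
  forall C a b c : R, 0 <= C -> 0 <= a -> 0 <= b -> 0 <= c ->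
  exists C' : R, 0 < C' /\
  forall (kappa h vs : R) (nu zeta eta eps : nat -> R),
    0 < kappa -> kappa < 1 -> 0 < h -> h < 1 / 2 ->
    (forall n, 0 <= nu n) -> (forall n, 0 <= zeta n) ->
    (forall n, 0 <= eta n) -> (forall n, 0 <= eps n) ->
    (forall n, nu n <= C * rpow kappa (- (2 * b)) * rpow (hseq h n) (- (2 * a))
                        * rpow (zeta n) c * (zeta n + eta n) * eps n) ->
    (forall n, zeta (S n) <= zeta n + nu n) ->
    (forall n, eta (S n) <= eta n + nu n) ->
    (forall n, eps (S n) <= nu n * eps n) ->
    1 <= zeta 0%nat -> eta 0%nat = 0 ->
    vs <= 1 ->
    eps 0%nat < vs / C' * rpow kappa (2 * b + 1) * rpow h (2 * a + 1)
                  * rpow (zeta 0%nat) (- c - 2) ->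
    forall n : nat,
      eps n <= (kappa * h / zeta 0%nat) ^ (2 ^ n - 1) * eps 0%nat /\
      (0 < zeta n -> eta n < vs / zeta n).
Proof.
  intros C a b c HC Ha Hb Hc.
  exists (threshold_const C a c). split; [now apply threshold_const_pos |].
  intros kappa h vs nu zeta eta eps Hk Hk1 Hh Hh1 _ Hzeta_nonneg Heta_nonneg
    Heps_nonneg Hnu Hzeta_succ Heta_succ Heps_succ Hz Heta_init Hvs Hsmall.
  set (z := zeta 0%nat) in *. set (e := eps 0%nat) in *.
  set (A := growth a). set (K := step_const C a b c kappa h z). set (q := kappa * h / z).
  assert (HA : 1 <= A) by now apply growth_ge1.
  assert (HK : 0 <= K) by (apply step_const_nonneg; lra).
  assert (Hq : 0 <= q <= 1 / 2) by (apply ratio_range; lra).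
  destruct (initial_smallness C a b c kappa h z vs e HC Ha Hk Hh ltac:(lra) (Heps_nonneg 0%nat) Hsmall)
    as [Hvs_pos Hinit]; fold A K q in Hinit.
  assert (Hgrowth : 2 * (K * A * e) <= q * vs / 8).
  { assert (K * e * A <= K * e * A ^ 2)
      by (apply Rmult_le_compat_l; [apply Rmult_le_pos; [lra | apply Heps_nonneg] | simpl; nra]).
    lra. }
  assert (Hnu_lin : forall n, zeta n <= 2 * z -> eta n <= z -> nu n <= K * A ^ S n * eps n).
  { intros n Hzn Hen. eapply nu_linear_bound; try apply Hnu; auto; lra. }
  assert (Hsmall' : K * e * A ^ 2 <= q) by nra.
  assert (Hroom : 2 * (K * A * e) <= z) by nra.
  pose proof (quadratic_recursion_bounds K A q z nu zeta eta eps HK HA Hq Heps_nonneg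
    Hzeta_succ Heta_succ Heps_succ Hnu_lin (Rle_refl z) Heta_init Hsmall' Hroom) as Hbounds.
  fold e in Hbounds.
  intros n. destruct (Hbounds n) as [Heps_n [Hzeta_n Heta_n]]. split.
  - assert (eps n * 1 <= eps n * A ^ n)
      by (apply Rmult_le_compat_l; [apply Heps_nonneg | now apply pow_R1_Rle]).
    lra.
  - intros Hzn. pose proof (Heta_nonneg n).
    apply (eta_lt_of_small kappa h z); fold q; repeat split; lra.
Qed.
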